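(* Let $\Bbbk$ be a field, $m\in\mathbb N$, $K=\Bbbk[\sigma]/(\sigma^m)\subset L=\Bbbk[\varepsilon]/(\varepsilon^{2m})$ via $\sigma=\varepsilon^2$, $K_j=K/(\sigma^j)$ and $L_j=L/(\varepsilon^{2j})$. Let $0\le j\le m$, $V=K\oplus K_j$, and let $\tilde\theta:V\to L$ be an injective $K$-linear map such that its adjoint $\theta:L\otimes_K V\cong L\oplus L_j\to L$ is surjective; write $\theta=(a\mid b)$ with $a,b\in L$, $\varepsilon^{2j}b=0$ (for $j=0$ the second entry is absent). Then there exists an element $\gamma=\alpha_0+\alpha_1\varepsilon^2+\dots+\alpha_{m-j-1}\varepsilon^{2(m-j-1)}\in L$ ($\alpha_i\in\Bbbk$) such that $\theta$ is equivalent to $\vartheta_\gamma:=(1+\varepsilon\gamma\mid\varepsilon^{2(m-j)+1})$. Moreover, $\vartheta_\gamma$ and $\vartheta_{\gamma'}$ are equivalent if and only if $\gamma=\gamma'$.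
   Context: Two $L$-linear maps $\theta,\theta':L\otimes_K V\to L$ are called equivalent if there is $\varphi\in\operatorname{Aut}_K(V)$ with $\theta'=\theta\circ(1\otimes\varphi)$. *)

From HB Require Import structures.
From mathcomp Require Import all_boot all_order all_algebra.
Set Implicit Arguments. Unset Strict Implicit. Unset Printing Implicit Defensive.
Import GRing.Theory.
Local Open Scope ring_scope.

(* Concrete model:
   - an element of L = k[eps]/(eps^(2m)) is represented by a polynomial in eps;
   - an element of K = k[sigma]/(sigma^m) (resp. K_j = K/(sigma^j)) by a
     polynomial in sigma;
   - equality in these rings is congruence modulo 'X^(2m), 'X^m, 'X^j;
   - the inclusion K -> L, sigma |-> eps^2, is  x |-> x \Po 'X^2. *)

Section Defs.
Variable k : fieldType.

Definition eqmod (n : nat) (p q : {poly k}) : Prop := 'X^n %| (p - q).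

Definition embK (x : {poly k}) : {poly k} := x \Po 'X^2.

(* K-linear endomorphism phi of V = K (+) K_j given by
   phi(e1) = p e1 + q e2,  phi(e2) = r e1 + s e2  (p,r in K, q,s in K_j);
   it is well defined iff sigma^j r = 0 in K. *)
Definition homV_ok (m j : nat) (r : {poly k}) : Prop :=
  eqmod m (r * 'X^j) 0.

Definition compV_id (m j : nat) (p q r s p' q' r' s' : {poly k}) : Prop :=
  [/\ eqmod m (p * p' + q * r') 1, eqmod j (p * q' + q * s') 0,
      eqmod m (r * p' + s * r') 0 & eqmod j (r * q' + s * s') 1].

Definition autV (m j : nat) (p q r s : {poly k}) : Prop :=
  homV_ok m j r /\
  exists p' q' r' s' : {poly k},
    [/\ homV_ok m j r', compV_id m j p q r s p' q' r' s'
      & compV_id m j p' q' r' s' p q r s].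

(* theta = (a | b) and theta' = (a' | b') : L (+) L_j -> L are equivalent:
   theta' = theta o (1 (x) phi) for some phi in Aut_K(V). *)
Definition equivalent (m j : nat) (a b a' b' : {poly k}) : Prop :=
  exists p q r s : {poly k},
    [/\ autV m j p q r s,
        eqmod (2 * m) a' (embK p * a + embK q * b)
      & eqmod (2 * m) b' (embK r * a + embK s * b)].

Definition tilde_injective (m j : nat) (a b : {poly k}) : Prop :=
  forall x y : {poly k},
    eqmod (2 * m) (embK x * a + embK y * b) 0 -> eqmod m x 0 /\ eqmod j y 0.

Definition adjoint_surjective (m : nat) (a b : {poly k}) : Prop :=
  forall c : {poly k}, exists u v : {poly k}, eqmod (2 * m) c (u * a + v * b).

(* vartheta_gamma = (1 + eps gamma | eps^(2(m-j)+1)), gamma = g(eps^2) *)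
Definition vartheta_a (g : {poly k}) : {poly k} := 1 + 'X * embK g.
Definition vartheta_b (m j : nat) : {poly k} := 'X^((2 * (m - j)).+1).

End Defs.

From mathcomp Require Import all_boot all_order all_algebra.
From mathcomp Require Import ring.
Set Implicit Arguments. Unset Strict Implicit. Unset Printing Implicit Defensive.
Import GRing.Theory.
Local Open Scope ring_scope.

(* Since L = K (+) eps K, with [lpair u v] = u(eps^2) + eps v(eps^2), a map
   theta = (a | b) is the 2x2 matrix over K of the coordinates of a and b, and
   equivalence is left multiplication by an automorphism of V = K (+) K_j, i.e. a
   matrix whose second column lives in K_j and whose lower left entry is killed
   by sigma^j.  Surjectivity of theta makes a or b a unit of the local ring L, so
   a row operation makes the corner of the matrix a unit of K; two more row
   operations turn the first column into (1, 0), leaving b = eps sigma^(m-j) d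
   since eps^(2j) b = 0.  Injectivity of theta~ survives these operations and
   forces d to be a unit of K_j; scaling b to eps^(2(m-j)+1) and subtracting a
   multiple of it from a reduces gamma modulo sigma^(m-j).  Conversely an
   equivalence between two normal forms fixes the constant coordinate 1 of a, so
   its (1,1) entry is 1 modulo sigma^m and gamma is unchanged modulo
   sigma^(m-j). *)

Section Congruence.
Variable k : fieldType.
Implicit Types (p q r : {poly k}) (n : nat).

Lemma eqmod_eq n p q : p = q -> eqmod n p q.
Proof. by move->; rewrite /eqmod subrr dvdp0. Qed.

Lemma eqmod_refl n p : eqmod n p p.
Proof. exact: eqmod_eq. Qed.

Lemma eqmod_sym n p q : eqmod n p q -> eqmod n q p.
Proof. by rewrite /eqmod -opprB dvdpNr. Qed.

Lemma eqmod_trans n p q r : eqmod n p q -> eqmod n q r -> eqmod n p r.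
Proof. by move=> pq qr; rewrite /eqmod -(subrKA q); exact: dvdp_add. Qed.

Lemma eqmodD n p q p' q' :
  eqmod n p q -> eqmod n p' q' -> eqmod n (p + p') (q + q').
Proof. by move=> h h'; rewrite /eqmod opprD addrACA; exact: dvdp_add. Qed.

Lemma eqmodMl n r p q : eqmod n p q -> eqmod n (r * p) (r * q).
Proof. by rewrite /eqmod -mulrBr; exact: dvdp_mull. Qed.

Lemma eqmodMr n r p q : eqmod n p q -> eqmod n (p * r) (q * r).
Proof. by rewrite /eqmod -mulrBl; exact: dvdp_mulr. Qed.

Lemma eqmod_le n n' p q : (n <= n')%N -> eqmod n' p q -> eqmod n p q.
Proof. by move=> le; apply: dvdp_trans; exact: dvdp_exp2l. Qed.

Lemma eqmod0 p q : eqmod 0 p q.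
Proof. by rewrite /eqmod expr0 dvd1p. Qed.

Lemma eqmod_small n p q :
  (size p <= n)%N -> (size q <= n)%N -> eqmod n p q -> p = q.
Proof.
move=> sp sq pq; apply/eqP; rewrite -subr_eq0; apply: contraT => nz.
have := dvdp_leq nz pq; rewrite size_polyXn ltnNge (leq_trans (size_polyD _ _)) //.
by rewrite size_polyN geq_max sp.
Qed.

Lemma eqmod_inv n p : ~~ root p 0 -> exists q, eqmod n (q * p) 1.
Proof.
move=> p0; have /Bezout_eq1_coprimepP [[u v] /= uv] : coprimep p 'X^n.
  by apply: coprimep_expr; rewrite coprimepX.
by exists u; rewrite /eqmod -uv opprD addrA subrr add0r dvdpNr dvdp_mull.
Qed.

End Congruence.

Section Embedding.
Variable k : fieldType.
Implicit Types (p q u v a b f : {poly k}) (m n : nat).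

Definition lpair u v : {poly k} := embK u + 'X * embK v.

Lemma embK_Xn n : embK ('X^n : {poly k}) = 'X^(2 * n).
Proof. by rewrite /embK comp_Xn_poly exprM. Qed.

Lemma even_poly_embK p : even_poly (embK p) = p.
Proof.
apply/polyP => i; rewrite coef_even_poly coef_comp_poly_Xn //.
by rewrite -muln2 dvdn_mull // mulnK.
Qed.

Lemma odd_poly_embK p : odd_poly (embK p) = 0.
Proof.
apply/polyP => i; rewrite coef_odd_poly coef_comp_poly_Xn // coef0.
by rewrite dvdn2 /= odd_double.
Qed.

Lemma even_lpair u v : even_poly (lpair u v) = u.
Proof.
by rewrite even_polyD mulrC even_polyMX even_poly_embK odd_poly_embK mul0r addr0.
Qed.

Lemma odd_lpair u v : odd_poly (lpair u v) = v.
Proof. by rewrite odd_polyD mulrC odd_polyMX even_poly_embK odd_poly_embK add0r. Qed.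

Lemma lpair0 : lpair 0 0 = 0.
Proof. by rewrite /lpair /embK rmorph0 mulr0 addr0. Qed.

Lemma lpairE f : lpair (even_poly f) (odd_poly f) = f.
Proof. by rewrite /lpair mulrC poly_even_odd. Qed.

Lemma lpairB u v u' v' : lpair u v - lpair u' v' = lpair (u - u') (v - v').
Proof. by rewrite /lpair /embK !comp_polyB; ring. Qed.

Lemma embK_mul_lpair p u v : embK p * lpair u v = lpair (p * u) (p * v).
Proof. by rewrite /lpair /embK !comp_polyM; ring. Qed.

Lemma lpair_lin p q a b :
  embK p * a + embK q * b =
  lpair (p * even_poly a + q * even_poly b) (p * odd_poly a + q * odd_poly b).
Proof.
rewrite -[in LHS](lpairE a) -[in LHS](lpairE b) /lpair /embK.
by rewrite !comp_polyD !comp_polyM; ring.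
Qed.

Lemma eqmod_lpair m u v u' v' :
  eqmod (2 * m) (lpair u v) (lpair u' v') <-> eqmod m u u' /\ eqmod m v v'.
Proof.
rewrite /eqmod lpairB; split.
  case/dvdpP=> t e.
  have : lpair (u - u') (v - v') = lpair ('X^m * even_poly t) ('X^m * odd_poly t).
    by rewrite -embK_mul_lpair lpairE embK_Xn mulrC.
  move=> /[dup] /(congr1 (@even_poly _)) + /(congr1 (@odd_poly _)).
  by rewrite !even_lpair !odd_lpair => -> ->; rewrite !dvdp_mulIl.
case=> /dvdpP [s ->] /dvdpP [t ->].
by rewrite mulrC [t * _]mulrC -embK_mul_lpair embK_Xn dvdp_mulIl.
Qed.

Lemma eqmod_lin m p q a b a' :
  eqmod (2 * m) a' (embK p * a + embK q * b) <->
  eqmod m (even_poly a') (p * even_poly a + q * even_poly b) /\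
  eqmod m (odd_poly a') (p * odd_poly a + q * odd_poly b).
Proof. by rewrite lpair_lin -[a']lpairE eqmod_lpair !even_lpair !odd_lpair. Qed.

Lemma root_even_poly p : root (even_poly p) 0 = root p 0.
Proof. by rewrite !rootE !horner_coef0 coef_even_poly. Qed.

Lemma adjoint_surjective_root m a b :
  (0 < m)%N -> adjoint_surjective m a b -> ~~ root a 0 \/ ~~ root b 0.
Proof.
move=> m_gt0 /(_ 1) [u [v surj]].
have : 'X %| 1 - (u * a + v * b).
  by apply: dvdp_trans surj; rewrite -{1}(expr1 'X) dvdp_exp2l // muln_gt0.
rewrite -['X]subr0 dvdp_XsubCl rootE !hornerE.
move=> surj0; apply/orP; rewrite -negb_and; apply: contraL surj0.
by case/andP=> /rootP -> /rootP ->; rewrite !mulr0 addr0 subr0 oner_eq0.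
Qed.

End Embedding.

Section Mx2.
Variable k : fieldType.

Record mx2 := Mx2 { m11 : {poly k}; m12 : {poly k}; m21 : {poly k}; m22 : {poly k} }.

Definition mx2_mul (A B : mx2) : mx2 :=
  Mx2 (m11 A * m11 B + m12 A * m21 B) (m11 A * m12 B + m12 A * m22 B)
      (m21 A * m11 B + m22 A * m21 B) (m21 A * m12 B + m22 A * m22 B).

Definition mx2_0 : mx2 := Mx2 0 0 0 0.
Definition mx2_1 : mx2 := Mx2 1 0 0 1.

End Mx2.

Arguments mx2_0 {k}.
Arguments mx2_1 {k}.
Infix "*m2" := mx2_mul (at level 40, left associativity).

Local Ltac mx2_ring := rewrite /mx2_mul /=; congr Mx2; ring.

Section Mx2Theory.
Variable k : fieldType.
Implicit Types A B C : mx2 k.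

Lemma mx2_mulA A B C : A *m2 (B *m2 C) = A *m2 B *m2 C.
Proof. by case: A B C => ? ? ? ? [? ? ? ?] [? ? ? ?]; mx2_ring. Qed.

Lemma mx2_mul1r A : A *m2 mx2_1 = A.
Proof. by case: A => ? ? ? ?; mx2_ring. Qed.

Lemma mx2_mul1l A : mx2_1 *m2 A = A.
Proof. by case: A => ? ? ? ?; mx2_ring. Qed.

Lemma mx2_mul0l A : mx2_0 *m2 A = mx2_0.
Proof. by case: A => ? ? ? ?; mx2_ring. Qed.

(* Entries of the first column are compared modulo [X^n1], those of the second
   modulo [X^n2]; endomorphisms of [V = K (+) K_j] are compared with [(m, j)]. *)
Definition mx2_eqmod (n1 n2 : nat) (A B : mx2 k) : Prop :=
  [/\ eqmod n1 (m11 A) (m11 B), eqmod n2 (m12 A) (m12 B),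
      eqmod n1 (m21 A) (m21 B) & eqmod n2 (m22 A) (m22 B)].

Lemma mx2_eqmod_eq n1 n2 A B : A = B -> mx2_eqmod n1 n2 A B.
Proof. by move->; split; exact: eqmod_refl. Qed.

Lemma mx2_eqmod_sym n1 n2 A B : mx2_eqmod n1 n2 A B -> mx2_eqmod n1 n2 B A.
Proof. by case; split; exact: eqmod_sym. Qed.

Lemma mx2_eqmod_trans n1 n2 A B C :
  mx2_eqmod n1 n2 A B -> mx2_eqmod n1 n2 B C -> mx2_eqmod n1 n2 A C.
Proof. by case=> ? ? ? ? [? ? ? ?]; split; apply: eqmod_trans; eassumption. Qed.

Lemma mx2_eqmod_mull n1 n2 C A B :
  mx2_eqmod n1 n2 A B -> mx2_eqmod n1 n2 (C *m2 A) (C *m2 B).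
Proof. by case=> ? ? ? ?; split; apply: eqmodD; apply: eqmodMl. Qed.

End Mx2Theory.

Section Automorphisms.
Variables (k : fieldType) (n j : nat).
Local Notation m := (n + j)%N.
Implicit Types (A B E F M : mx2 k) (p q r s : {poly k}).

Lemma homV_ok_mulXn p : homV_ok m j (p * 'X^n).
Proof. by rewrite /homV_ok /eqmod subr0 -mulrA -exprD dvdp_mull. Qed.

Lemma eqmod_mulXn p q : eqmod j p q -> eqmod m (p * 'X^n) (q * 'X^n).
Proof. by rewrite /eqmod -mulrBl addnC exprD => pq; exact: dvdp_mul pq (dvdpp _). Qed.

Lemma eqmod_homV p q r : eqmod j p q -> homV_ok m j r -> eqmod m (p * r) (q * r).
Proof.
rewrite /homV_ok /eqmod subr0 -mulrBl => /dvdpP [t ->] hr.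
by rewrite -mulrA [_ * r]mulrC; exact: dvdp_mull.
Qed.

Definition mx2_hom A := homV_ok m j (m21 A).

Lemma mx2_hom_mul A B : mx2_hom A -> mx2_hom B -> mx2_hom (A *m2 B).
Proof.
rewrite /mx2_hom /homV_ok /eqmod !subr0 /= => hA hB.
rewrite mulrDl mulrAC -[m22 A * _ * _]mulrA.
exact: dvdp_add (dvdp_mulr _ hA) (dvdp_mull _ hB).
Qed.

Lemma mx2_eqmod_mulr E F B :
  mx2_hom B -> mx2_eqmod m j E F -> mx2_eqmod m j (E *m2 B) (F *m2 B).
Proof.
have jm : (j <= m)%N by rewrite leq_addl.
rewrite /mx2_hom => hB [e11 e12 e21 e22]; split=> /=; apply: eqmodD;
  by [exact: eqmodMr | exact: eqmod_homV | exact/eqmodMr/(eqmod_le jm)].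
Qed.

Definition mx2_aut A := autV m j (m11 A) (m12 A) (m21 A) (m22 A).

Lemma mx2_autP A : mx2_aut A <->
  mx2_hom A /\ exists B, [/\ mx2_hom B, mx2_eqmod m j (A *m2 B) mx2_1
                                       & mx2_eqmod m j (B *m2 A) mx2_1].
Proof.
split.
  by case=> hA [p' [q' [r' [s' [hB AB BA]]]]]; split=> //; exists (Mx2 p' q' r' s').
by case=> hA [[p' q' r' s'] [hB AB BA]]; split=> //; exists p', q', r', s'.
Qed.

Lemma mx2_aut_mul A B : mx2_aut A -> mx2_aut B -> mx2_aut (A *m2 B).
Proof.
move=> /mx2_autP [hA [A' [hA' AA' A'A]]] /mx2_autP [hB [B' [hB' BB' B'B]]].
apply/mx2_autP; split; first exact: mx2_hom_mul.
exists (B' *m2 A'); split; first exact: mx2_hom_mul.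
- apply: mx2_eqmod_trans AA'; rewrite -mx2_mulA [B *m2 _]mx2_mulA.
  by apply: mx2_eqmod_mull; rewrite -{2}(mx2_mul1l A'); exact: mx2_eqmod_mulr.
- apply: mx2_eqmod_trans B'B; rewrite -mx2_mulA [A' *m2 _]mx2_mulA.
  by apply: mx2_eqmod_mull; rewrite -{2}(mx2_mul1l B); exact: mx2_eqmod_mulr.
Qed.

Lemma mx2_hom_triu p q s : mx2_hom (Mx2 p q 0 s).
Proof. by rewrite /mx2_hom /homV_ok mul0r; exact: eqmod_refl. Qed.

Lemma mx2_aut_diag p s p' s' :
  eqmod m (p * p') 1 -> eqmod j (s * s') 1 -> mx2_aut (Mx2 p 0 0 s).
Proof.
move=> pp' ss'; apply/mx2_autP; split; first exact: mx2_hom_triu.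
exists (Mx2 p' 0 0 s'); split; first exact: mx2_hom_triu.
  by split; rewrite /= ?mulr0 ?mul0r ?addr0 ?add0r //; exact: eqmod_refl.
by split; rewrite /= ?mulr0 ?mul0r ?addr0 ?add0r 1?mulrC //; exact: eqmod_refl.
Qed.

Lemma mx2_aut_triu q : mx2_aut (Mx2 1 q 0 1).
Proof.
apply/mx2_autP; split; first exact: mx2_hom_triu.
exists (Mx2 1 (- q) 0 1).
by split; [exact: mx2_hom_triu | apply: mx2_eqmod_eq; mx2_ring..].
Qed.

Lemma mx2_aut_tril p : mx2_aut (Mx2 1 0 (p * 'X^n) 1).
Proof.
apply/mx2_autP; split; first exact: homV_ok_mulXn.
exists (Mx2 1 0 ((- p) * 'X^n) 1).
by split; [exact: homV_ok_mulXn | apply: mx2_eqmod_eq; mx2_ring..].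
Qed.

Definition row_equiv M M' := exists A, mx2_aut A /\ mx2_eqmod m m M' (A *m2 M).

Lemma row_equiv_trans M M' M'' : row_equiv M M' -> row_equiv M' M'' -> row_equiv M M''.
Proof.
case=> A [autA eA] [B [autB eB]]; exists (B *m2 A); split; first exact: mx2_aut_mul.
by rewrite -mx2_mulA; apply: mx2_eqmod_trans eB _; exact: mx2_eqmod_mull.
Qed.

Lemma eqmod_row_equiv M M' : mx2_eqmod m m M' M -> row_equiv M M'.
Proof.
move=> eM; exists mx2_1; rewrite mx2_mul1l; split=> //.
by apply: (@mx2_aut_diag 1 1 1 1); rewrite mulr1; exact: eqmod_refl.
Qed.

Lemma row_equiv_refl M : row_equiv M M.
Proof. exact/eqmod_row_equiv/mx2_eqmod_eq. Qed.

(* The rows of [X] are elements of [V]; those of [X *m2 M] are their images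
   under theta~, in coordinates. *)
Definition row_injective M :=
  forall X, mx2_eqmod m m (X *m2 M) mx2_0 -> mx2_eqmod m j X mx2_0.

Lemma row_injective_equiv M M' : row_equiv M M' -> row_injective M -> row_injective M'.
Proof.
case=> A [/mx2_autP [_ [B [hB AB _]]] eM'] injM X XM'.
have XA0 : mx2_eqmod m j (X *m2 A) mx2_0.
  apply: injM; rewrite -mx2_mulA; apply: mx2_eqmod_trans XM'.
  exact/mx2_eqmod_sym/mx2_eqmod_mull.
rewrite -(mx2_mul1r X) -(mx2_mul0l B); apply: mx2_eqmod_trans (mx2_eqmod_mulr hB XA0).
by rewrite -mx2_mulA; apply/mx2_eqmod_mull/mx2_eqmod_sym.
Qed.

End Automorphisms.

Section NormalForm.
Variables (k : fieldType) (n j : nat).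
Local Notation m := (n + j)%N.
Implicit Types (a b g : {poly k}).

Definition coord_mx a b : mx2 k :=
  Mx2 (even_poly a) (odd_poly a) (even_poly b) (odd_poly b).

Lemma coord_mx_lpair (a0 a1 b0 b1 : {poly k}) :
  coord_mx (lpair a0 a1) (lpair b0 b1) = Mx2 a0 a1 b0 b1.
Proof. by rewrite /coord_mx !even_lpair !odd_lpair. Qed.

Lemma equivalentE a b a' b' :
  equivalent m j a b a' b' <-> row_equiv n j (coord_mx a b) (coord_mx a' b').
Proof.
split.
  case=> p [q [r [s [autA /eqmod_lin [e11 e12] /eqmod_lin [e21 e22]]]]].
  by exists (Mx2 p q r s).
case=> -[p q r s] [autA [e11 e12 e21 e22]].
by exists p, q, r, s; split=> //; apply/eqmod_lin.
Qed.

Lemma tilde_injective_row a b :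
  tilde_injective m j a b -> row_injective n j (coord_mx a b).
Proof.
move=> inj X [e11 e12 e21 e22].
have row x y : eqmod m (x * even_poly a + y * even_poly b) 0 ->
    eqmod m (x * odd_poly a + y * odd_poly b) 0 -> eqmod m x 0 /\ eqmod j y 0.
  move=> e0 e1; apply/inj/eqmod_sym/eqmod_lin.
  by rewrite !raddf0; split; exact: eqmod_sym.
by case: (row _ _ e11 e12) (row _ _ e21 e22) => ? ? [? ?]; split.
Qed.

Lemma coord_mx_vartheta g : coord_mx (vartheta_a g) (vartheta_b k m j) = Mx2 1 g 0 'X^n.
Proof.
rewrite -coord_mx_lpair /vartheta_a /vartheta_b addnK /lpair embK_Xn -exprS.
by rewrite /embK rmorph1 rmorph0 add0r.
Qed.

End NormalForm.

Section Reduction.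
Variables (k : fieldType) (n j : nat).
Local Notation m := (n + j)%N.
Implicit Types (g h d b : {poly k}).

Lemma even_odd_poly_annihilated b : eqmod (2 * m) ('X^(2 * j) * b) 0 ->
  exists b0 b1, even_poly b = b0 * 'X^n /\ odd_poly b = b1 * 'X^n.
Proof.
move=> hb; have : eqmod (2 * n) (lpair (even_poly b) (odd_poly b)) (lpair 0 0).
  rewrite lpairE lpair0 /eqmod subr0.
  rewrite -(dvdp_mul2l _ _ (monic_neq0 (monicXn _ (2 * j)))).
  by move: hb; rewrite /eqmod subr0 -exprD -mulnDr addnC.
case/eqmod_lpair; rewrite /eqmod !subr0 => /dvdpP [b0 ->] /dvdpP [b1 ->].
by exists b0, b1.
Qed.

Lemma row_equiv_unit_corner (a0 a1 b0 b1 : {poly k}) :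
  ((0 < m)%N -> ~~ root a0 0 \/ ~~ root b0 0) ->
  exists a0' a1', ~~ root a0' 0 /\ row_equiv n j (Mx2 a0 a1 b0 b1) (Mx2 a0' a1' b0 b1).
Proof.
move=> unit0; have [m0 | /unit0 nz0] := posnP m.
  exists 1, a1; split; first exact: root1.
  by apply: eqmod_row_equiv; rewrite m0; split; exact: eqmod0.
have [ra0 | na0] := boolP (root a0 0); last first.
  by exists a0, a1; split=> //; exact: row_equiv_refl.
have nb0 : ~~ root b0 0 by case: nz0 => // /negP /(_ ra0).
exists (a0 + b0), (a1 + b1); split.
  by move: ra0 nb0; rewrite !rootE hornerD => /eqP ->; rewrite add0r.
exists (Mx2 1 1 0 1); split; first exact: mx2_aut_triu.
by apply: mx2_eqmod_eq; mx2_ring.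
Qed.

Lemma reduce_first_column (a0 a1 b0 b1 : {poly k}) : ~~ root a0 0 ->
  exists h d, row_equiv n j (Mx2 a0 a1 (b0 * 'X^n) (b1 * 'X^n)) (Mx2 1 h 0 (d * 'X^n)).
Proof.
move=> na0; have [c ca0] := eqmod_inv m na0.
exists (c * a1), (b1 - b0 * (c * a1)).
apply: (@row_equiv_trans _ _ _ _ (Mx2 1 (c * a1) (b0 * 'X^n) (b1 * 'X^n))).
  exists (Mx2 c 0 0 1); split.
    by apply: (mx2_aut_diag (s' := 1) ca0); rewrite mulr1; exact: eqmod_refl.
  split; rewrite /= ?mul0r ?mul1r ?addr0 ?add0r;
    [exact: eqmod_sym | exact: eqmod_refl..].
exists (Mx2 1 0 ((- b0) * 'X^n) 1); split; first exact: mx2_aut_tril.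
by apply: mx2_eqmod_eq; mx2_ring.
Qed.

Lemma row_injective_unit h d :
  row_injective n j (Mx2 1 h 0 (d * 'X^n)) -> exists e, eqmod j (e * d) 1.
Proof.
(* If [X %| d], then theta~ kills [(0, sigma^(j-1))], which is nonzero in [V]. *)
move=> inj; have [j0 | j_gt0] := posnP j; first by exists 0; rewrite j0; exact: eqmod0.
apply: eqmod_inv; apply/negP => d0.
have [d' ed] : exists d', d = d' * 'X by apply/dvdpP; rewrite -['X]subr0 dvdp_XsubCl.
have eX : 'X^m = 'X^(j.-1) * 'X * 'X^n :> {poly k}.
  by rewrite -exprSr prednK // -exprD addnC.
have : mx2_eqmod m m (Mx2 0 'X^(j.-1) 0 0 *m2 Mx2 1 h 0 (d * 'X^n)) mx2_0.
  split; rewrite /= ?mul0r ?mulr0 ?add0r ?addr0; try exact: eqmod_refl.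
  rewrite /eqmod subr0 ed eX [X in _ %| X](_ : _ = d' * ('X^(j.-1) * 'X * 'X^n)).
    exact: dvdp_mull.
  by ring.
case/inj=> _ + _ _; rewrite /eqmod subr0 => /(dvdp_leq (monic_neq0 (monicXn _ _))).
by rewrite !size_polyXn prednK // ltnn.
Qed.

Lemma reduce_second_column h d : row_injective n j (Mx2 1 h 0 (d * 'X^n)) ->
  exists g, (size g <= n)%N /\ row_equiv n j (Mx2 1 h 0 (d * 'X^n)) (Mx2 1 g 0 'X^n).
Proof.
move=> /row_injective_unit [e ed].
have [q [g [-> sg]]] : exists q g, h = q * 'X^n + g /\ (size g <= n)%N.
  exists (h %/ 'X^n), (h %% 'X^n); split; first exact: divp_eq.
  by have := ltn_modpN0 h (monic_neq0 (monicXn k n)); rewrite size_polyXn ltnS.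
exists g; split=> //.
apply: (@row_equiv_trans _ _ _ _ (Mx2 1 (q * 'X^n + g) 0 'X^n)).
  exists (Mx2 1 0 0 e); split.
    by apply: (mx2_aut_diag (p' := 1) _ ed); rewrite mulr1; exact: eqmod_refl.
  split; rewrite /= ?mul0r ?mul1r ?mulr0 ?addr0 ?add0r; try exact: eqmod_refl.
  by apply: eqmod_sym; rewrite mulrA -[X in eqmod _ _ X]mul1r; exact: eqmod_mulXn.
exists (Mx2 1 (- q) 0 1); split; first exact: mx2_aut_triu.
by apply: mx2_eqmod_eq; mx2_ring.
Qed.

Lemma row_equiv_vartheta_inj g g' : (size g <= n)%N -> (size g' <= n)%N ->
  row_equiv n j (Mx2 1 g 0 'X^n) (Mx2 1 g' 0 'X^n) -> g = g'.
Proof.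
move=> sg sg' [[p q r s] [_ [/= e11 e12 _ _]]].
rewrite mulr1 mulr0 addr0 in e11.
have nm : (n <= m)%N by exact: leq_addr.
apply: eqmod_small sg sg' _; apply: eqmod_sym; apply: eqmod_trans (eqmod_le nm e12) _.
rewrite -[X in eqmod _ _ X]addr0 -[X in eqmod _ _ (X + _)]mul1r.
apply: eqmodD; first exact/eqmodMr/eqmod_sym/(eqmod_le nm).
by rewrite /eqmod subr0 dvdp_mull.
Qed.

End Reduction.

Theorem proposition3p6 (k : fieldType) (m j : nat) : (j <= m)%N ->
  (forall a b : {poly k},
      eqmod (2 * m) ('X^(2 * j) * b) 0 ->
      tilde_injective m j a b ->
      adjoint_surjective m a b ->
      exists g : {poly k}, (size g <= m - j)%N /\
        equivalent m j a b (vartheta_a g) (vartheta_b k m j)) /\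
  (forall g g' : {poly k}, (size g <= m - j)%N -> (size g' <= m - j)%N ->
      (equivalent m j (vartheta_a g) (vartheta_b k m j)
                      (vartheta_a g') (vartheta_b k m j) <-> g = g')).
Proof.
move=> /subnK <-; set n := (m - j)%N; rewrite addnK; split.
  move=> a b /even_odd_poly_annihilated [b0 [b1 [eb0 eb1]]].
  move=> /tilde_injective_row inj surj.
  have Eab : coord_mx a b = Mx2 (even_poly a) (odd_poly a) (b0 * 'X^n) (b1 * 'X^n).
    by rewrite /coord_mx eb0 eb1.
  have unit0 : (0 < n + j)%N -> ~~ root (even_poly a) 0 \/ ~~ root (b0 * 'X^n) 0.
    by move/adjoint_surjective_root/(_ surj); rewrite -eb0 !root_even_poly.
  have [a0 [a1 [na0 E1]]] := row_equiv_unit_corner (odd_poly a) (b1 * 'X^n) unit0.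
  have [h [d E2]] := reduce_first_column n j a1 b0 b1 na0.
  rewrite Eab in inj; have E12 := row_equiv_trans E1 E2.
  have [g [sg E3]] := reduce_second_column (row_injective_equiv E12 inj).
  exists g; split=> //.
  by rewrite equivalentE coord_mx_vartheta Eab; exact: row_equiv_trans E12 E3.
move=> g g' sg sg'; rewrite equivalentE !coord_mx_vartheta.
by split=> [/row_equiv_vartheta_inj -> // | ->]; exact: row_equiv_refl.
Qed.
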